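(* Let $\Psi$ be a well-formed declarative context and suppose $\Psi\vdash e\Rightarrow A$. Then: (i) if $\Psi,x:A\vdash e'\Leftarrow C$ then $\Psi\vdash[e/x]e'\Leftarrow C$; (ii) if $\Psi,x:A\vdash e'\Rightarrow C$ then $\Psi\vdash[e/x]e'\Rightarrow C$; (iii) if $\Psi,x:A\vdash e'\bullet B\Rightarrow\!\!\Rightarrow C$ then $\Psi\vdash[e/x]e'\bullet B\Rightarrow\!\!\Rightarrow C$.
   Context: Types $A,B,C ::= 1\mid\alpha\mid\forall\alpha.A\mid A\to B$; monotypes $\sigma,\tau ::= 1\mid\alpha\mid\sigma\to\tau$; declarative contexts $\Psi ::= \cdot\mid\Psi,\alpha\mid\Psi,x:A$. Well-formedness $\Psi\vdash A$: all type variables of $A$ are bound or declared in $\Psi$. Declarative subtyping $\Psi\vdash A\le B$: least relation with $\alpha\in\Psi\Rightarrow\Psi\vdash\alpha\le\alpha$; $\Psi\vdash1\le1$; ($\Psi\vdash B_1\le A_1$, $\Psi\vdash A_2\le B_2$) $\Rightarrow\Psi\vdash A_1\to A_2\le B_1\to B_2$; ($\Psi\vdash\tau$ monotype, $\Psi\vdash[\tau/\alpha]A\le B$) $\Rightarrow\Psi\vdash\forall\alpha.A\le B$; $\Psi,\beta\vdash A\le B\Rightarrow\Psi\vdash A\le\forall\beta.B$. Terms $e ::= x\mid()\mid\lambda x.e\mid e_1\,e_2\mid(e:A)$; $[e/x]e'$ is capture-avoiding substitution of terms. Declarative bidirectional judgments (checking $\Leftarrow$, synthesis $\Rightarrow$,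 application $e\bullet A\Rightarrow\!\!\Rightarrow C$) are defined mutually by: $(x:A)\in\Psi\Rightarrow\Psi\vdash x\Rightarrow A$; ($\Psi\vdash e\Rightarrow A$, $\Psi\vdash A\le B$) $\Rightarrow\Psi\vdash e\Leftarrow B$; ($\Psi\vdash A$, $\Psi\vdash e\Leftarrow A$) $\Rightarrow\Psi\vdash(e:A)\Rightarrow A$; $\Psi\vdash()\Leftarrow1$; $\Psi\vdash()\Rightarrow1$; $\Psi,\alpha\vdash e\Leftarrow A\Rightarrow\Psi\vdash e\Leftarrow\forall\alpha.A$; ($\Psi\vdash\tau$ monotype, $\Psi\vdash e\bullet[\tau/\alpha]A\Rightarrow\!\!\Rightarrow C$) $\Rightarrow\Psi\vdash e\bullet\forall\alpha.A\Rightarrow\!\!\Rightarrow C$; $\Psi,x:A\vdash e\Leftarrow B\Rightarrow\Psi\vdash\lambda x.e\Leftarrow A\to B$; ($\Psi\vdash\sigma\to\tau$ monotypes, $\Psi,x:\sigma\vdash e\Leftarrow\tau$) $\Rightarrow\Psi\vdash\lambda x.e\Rightarrow\sigma\to\tau$; ($\Psi\vdash e_1\Rightarrow A$, $\Psi\vdash e_2\bullet A\Rightarrow\!\!\Rightarrow C$) $\Rightarrow\Psi\vdash e_1\,e_2\Rightarrow C$; $\Psi\vdash e\Leftarrow A\Rightarrow\Psi\vdash e\bullet A\to C\Rightarrow\!\!\Rightarrow C$. *)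

(* Declarative bidirectional system (Dunfield–Krishnaswami style),
   represented with de Bruijn indices:
   - type variables are de Bruijn indices counting the type-variable entries
     (alpha) of the context, most recent = 0; forall binds index 0 of its body;
   - term variables are de Bruijn indices counting the term-variable entries
     (x : A) of the context, most recent = 0; lambda binds index 0 of its body.
   The two index spaces are separate. *)
From Stdlib Require Import Arith List.
Import ListNotations.

Inductive typ : Type :=
| TUnit : typ
| TVar : nat -> typ
| TAll : typ -> typ
| TArr : typ -> typ -> typ.

Fixpoint mono (A : typ) : Prop :=
  match A with
  | TUnit => True
  | TVar _ => True
  | TAll _ => False
  | TArr A B => mono A /\ mono B
  end.

Fixpoint tshift (c : nat) (A : typ) : typ :=
  match A with
  | TUnit => TUnit
  | TVar n => if n <? c then TVar n else TVar (S n)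
  | TAll B => TAll (tshift (S c) B)
  | TArr A1 A2 => TArr (tshift c A1) (tshift c A2)
  end.

Fixpoint tsubst (k : nat) (s : typ) (A : typ) : typ :=
  match A with
  | TUnit => TUnit
  | TVar n => if n <? k then TVar n else if n =? k then s else TVar (pred n)
  | TAll B => TAll (tsubst (S k) (tshift 0 s) B)
  | TArr A1 A2 => TArr (tsubst k s A1) (tsubst k s A2)
  end.

(* [tau/alpha]A where A is the body of forall alpha. A *)
Definition topen (tau A : typ) : typ := tsubst 0 tau A.

Inductive tm : Type :=
| Var : nat -> tm
| Unit : tm
| Lam : tm -> tm
| App : tm -> tm -> tm
| Anno : tm -> typ -> tm.

Fixpoint shift (c : nat) (e : tm) : tm :=
  match e with
  | Var n => if n <? c then Var n else Var (S n)
  | Unit => Unit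
  | Lam b => Lam (shift (S c) b)
  | App e1 e2 => App (shift c e1) (shift c e2)
  | Anno e1 A => Anno (shift c e1) A
  end.

Fixpoint subst (k : nat) (s : tm) (e : tm) : tm :=
  match e with
  | Var n => if n <? k then Var n else if n =? k then s else Var (pred n)
  | Unit => Unit
  | Lam b => Lam (subst (S k) (shift 0 s) b)
  | App e1 e2 => App (subst k s e1) (subst k s e2)
  | Anno e1 A => Anno (subst k s e1) A
  end.

Fixpoint tm_tshift (e : tm) : tm :=
  match e with
  | Var n => Var n
  | Unit => Unit
  | Lam b => Lam (tm_tshift b)
  | App e1 e2 => App (tm_tshift e1) (tm_tshift e2)
  | Anno e1 A => Anno (tm_tshift e1) (tshift 0 A)
  end.

(* declarative contexts; the head of the list is the most recent entry *)
Inductive entry : Type :=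
| CTv : entry
| CVar : typ -> entry.   (* x : A, A relative to the preceding context *)

Definition ctx := list entry.

Fixpoint ntv (G : ctx) : nat :=
  match G with
  | [] => 0
  | CTv :: G => S (ntv G)
  | CVar _ :: G => ntv G
  end.

(* type of term variable k, expressed relative to the whole context *)
Fixpoint lookup (G : ctx) (k : nat) : option typ :=
  match G with
  | [] => None
  | CTv :: G => option_map (tshift 0) (lookup G k)
  | CVar A :: G => match k with 0 => Some A | S k' => lookup G k' end
  end.

Fixpoint wf_typ_n (n : nat) (A : typ) : Prop :=
  match A with
  | TUnit => True
  | TVar m => m < n
  | TAll B => wf_typ_n (S n) B
  | TArr A1 A2 => wf_typ_n n A1 /\ wf_typ_n n A2
  end.

Definition wf_typ (G : ctx) (A : typ) : Prop := wf_typ_n (ntv G) A.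

Fixpoint wf_ctx (G : ctx) : Prop :=
  match G with
  | [] => True
  | CTv :: G => wf_ctx G
  | CVar A :: G => wf_ctx G /\ wf_typ G A
  end.

Inductive sub : ctx -> typ -> typ -> Prop :=
| SubVar : forall G n, n < ntv G -> sub G (TVar n) (TVar n)
| SubUnit : forall G, sub G TUnit TUnit
| SubArr : forall G A1 A2 B1 B2,
    sub G B1 A1 -> sub G A2 B2 -> sub G (TArr A1 A2) (TArr B1 B2)
| SubAllL : forall G A B tau,
    mono tau -> wf_typ G tau -> sub G (topen tau A) B -> sub G (TAll A) B
| SubAllR : forall G A B,
    sub (CTv :: G) (tshift 0 A) B -> sub G A (TAll B).

(* check G e A : Psi |- e <= A;  synth G e A : Psi |- e => A;
   app G e A C : Psi |- e . A =>> C *)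
Inductive check : ctx -> tm -> typ -> Prop :=
| ChkSub : forall G e A B, synth G e A -> sub G A B -> check G e B
| ChkUnit : forall G, check G Unit TUnit
| ChkAllI : forall G e A, check (CTv :: G) (tm_tshift e) A -> check G e (TAll A)
| ChkLam : forall G e A B, check (CVar A :: G) e B -> check G (Lam e) (TArr A B)
with synth : ctx -> tm -> typ -> Prop :=
| SynVar : forall G k A, lookup G k = Some A -> synth G (Var k) A
| SynAnno : forall G e A, wf_typ G A -> check G e A -> synth G (Anno e A) A
| SynUnit : forall G, synth G Unit TUnit
| SynLam : forall G e s t,
    mono (TArr s t) -> wf_typ G (TArr s t) -> check (CVar s :: G) e t ->
    synth G (Lam e) (TArr s t)
| SynApp : forall G e1 e2 A C, synth G e1 A -> app G e2 A C -> synth G (App e1 e2) C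
with app : ctx -> tm -> typ -> typ -> Prop :=
| AppAll : forall G e A C tau,
    mono tau -> wf_typ G tau -> app G e (topen tau A) C -> app G e (TAll A) C
| AppArr : forall G e A C, check G e A -> app G e (TArr A C) C.

(* By simultaneous induction on the three judgments, generalised to substitution
   for an arbitrary term variable [k] of an arbitrary context.  Subtyping only
   depends on the number of type variables in scope, so it is untouched.  Going
   under a binder requires weakening the derivation of [Psi |- e => A]: under a
   lambda by a term variable (shifting [e]), under the forall-introduction rule by
   a type variable (shifting the annotations of [e] and the type [A]). *)

From Stdlib Require Import Arith Lia.
Local Open Scope list_scope.

Ltac index_cases :=
  repeat match goal with
  | |- context [?a <? ?b] => destruct (Nat.ltb_spec a b); cbn [tshift tsubst pred]
  | |- context [?a =? ?b] => destruct (Nat.eqb_spec a b); cbn [tshift tsubst pred]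
  end; try lia; try reflexivity; try (f_equal; lia).

Lemma tshift_tshift (A : typ) : forall d c, d <= c ->
  tshift (S c) (tshift d A) = tshift d (tshift c A).
Proof.
  induction A as [| n | B IHB | A1 IH1 A2 IH2]; intros d c Hdc; simpl.
  - reflexivity.
  - index_cases.
  - f_equal; apply IHB; lia.
  - f_equal; auto.
Qed.

Lemma tshift_tsubst (A : typ) : forall k c s, k <= c ->
  tshift c (tsubst k s A) = tsubst k (tshift c s) (tshift (S c) A).
Proof.
  induction A as [| n | B IHB | A1 IH1 A2 IH2]; intros k c s Hkc; simpl.
  - reflexivity.
  - index_cases.
  - f_equal. rewrite IHB by lia. f_equal. apply tshift_tshift; lia.
  - f_equal; auto.
Qed.

Lemma tshift_topen (c : nat) (tau A : typ) :
  tshift c (topen tau A) = topen (tshift c tau) (tshift (S c) A).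
Proof. apply tshift_tsubst; lia. Qed.

Lemma mono_tshift (A : typ) : forall c, mono A -> mono (tshift c A).
Proof.
  induction A as [| n | B _ | A1 IH1 A2 IH2]; intros c HA; simpl in *; auto.
  - destruct (n <? c); exact I.
  - destruct HA; split; auto.
Qed.

Lemma wf_typ_n_tshift (A : typ) : forall n c, wf_typ_n n A -> wf_typ_n (S n) (tshift c A).
Proof.
  induction A as [| m | B IHB | A1 IH1 A2 IH2]; intros n c HA; simpl in *; auto.
  - destruct (Nat.ltb_spec m c); simpl; lia.
  - destruct HA; split; auto.
Qed.

Fixpoint tm_tshift_at (c : nat) (e : tm) : tm :=
  match e with
  | Var n => Var n
  | Unit => Unit
  | Lam b => Lam (tm_tshift_at c b)
  | App e1 e2 => App (tm_tshift_at c e1) (tm_tshift_at c e2)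
  | Anno e1 A => Anno (tm_tshift_at c e1) (tshift c A)
  end.

Lemma tm_tshift_at0 (e : tm) : tm_tshift_at 0 e = tm_tshift e.
Proof. induction e; simpl; f_equal; auto. Qed.

Lemma tm_tshift_tm_tshift_at (c : nat) (e : tm) :
  tm_tshift (tm_tshift_at c e) = tm_tshift_at (S c) (tm_tshift e).
Proof. induction e; simpl; f_equal; auto. symmetry; apply tshift_tshift; lia. Qed.

Lemma tm_tshift_shift (c : nat) (e : tm) : tm_tshift (shift c e) = shift c (tm_tshift e).
Proof.
  revert c; induction e; intros c; simpl; f_equal; auto.
  destruct (n <? c); reflexivity.
Qed.

Lemma tm_tshift_subst (e : tm) : forall k s,
  tm_tshift (subst k s e) = subst k (tm_tshift s) (tm_tshift e).
Proof.
  induction e as [n | | b IHb | e1 IH1 e2 IH2 | e1 IH1 A]; intros k s; simpl;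
    f_equal; auto.
  - destruct (n <? k); [reflexivity|]. destruct (n =? k); reflexivity.
  - rewrite IHb, tm_tshift_shift. reflexivity.
Qed.

(* [G'] is [G] with a fresh type variable inserted at de Bruijn level [c]. *)
Definition ctx_tshift (c : nat) (G G' : ctx) : Prop :=
  ntv G' = S (ntv G) /\ forall k, lookup G' k = option_map (tshift c) (lookup G k).

Lemma ctx_tshift_head (G : ctx) : ctx_tshift 0 G (CTv :: G).
Proof. split; reflexivity. Qed.

Lemma ctx_tshift_tv (c : nat) (G G' : ctx) :
  ctx_tshift c G G' -> ctx_tshift (S c) (CTv :: G) (CTv :: G').
Proof.
  intros [Hn Hl]; split; simpl; [now rewrite Hn|].
  intros k; rewrite Hl. destruct (lookup G k); simpl; [|reflexivity].
  f_equal; symmetry; apply tshift_tshift; lia.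
Qed.

Lemma ctx_tshift_var (c : nat) (G G' : ctx) (A : typ) :
  ctx_tshift c G G' -> ctx_tshift c (CVar A :: G) (CVar (tshift c A) :: G').
Proof. intros [Hn Hl]; split; [exact Hn|]. intros [|k]; simpl; auto. Qed.

(* [G'] is [G] with its term variable [k] removed. *)
Definition ctx_drop (k : nat) (G G' : ctx) : Prop :=
  ntv G' = ntv G /\
  (forall j, j < k -> lookup G' j = lookup G j) /\
  (forall j, k <= j -> lookup G' j = lookup G (S j)).

Lemma ctx_drop_head (G : ctx) (A : typ) : ctx_drop 0 (CVar A :: G) G.
Proof. repeat split; intros; simpl; auto; lia. Qed.

Lemma ctx_drop_tv (k : nat) (G G' : ctx) :
  ctx_drop k G G' -> ctx_drop k (CTv :: G) (CTv :: G').
Proof.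
  intros (Hn & Hlt & Hge); repeat split; simpl; [now rewrite Hn| |];
    intros j Hj; [rewrite Hlt | rewrite Hge]; auto.
Qed.

Lemma ctx_drop_var (k : nat) (G G' : ctx) (A : typ) :
  ctx_drop k G G' -> ctx_drop (S k) (CVar A :: G) (CVar A :: G').
Proof.
  intros (Hn & Hlt & Hge); repeat split; [exact Hn| |];
    intros [|j] Hj; simpl; auto; try lia; [apply Hlt | apply Hge]; lia.
Qed.

Lemma wf_typ_ntv (G G' : ctx) (A : typ) : ntv G' = ntv G -> wf_typ G A -> wf_typ G' A.
Proof. unfold wf_typ; intros ->; auto. Qed.

Lemma wf_typ_tshift (G G' : ctx) (c : nat) (A : typ) :
  ntv G' = S (ntv G) -> wf_typ G A -> wf_typ G' (tshift c A).
Proof. unfold wf_typ; intros ->; apply wf_typ_n_tshift. Qed.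

Lemma sub_ntv (G : ctx) (A B : typ) : sub G A B ->
  forall G', ntv G' = ntv G -> sub G' A B.
Proof.
  induction 1; intros G' Hn.
  - constructor; lia.
  - constructor.
  - constructor; auto.
  - eapply SubAllL; eauto using wf_typ_ntv.
  - constructor; apply IHsub; simpl; lia.
Qed.

Lemma sub_tshift (G : ctx) (A B : typ) : sub G A B ->
  forall G' c, ntv G' = S (ntv G) -> sub G' (tshift c A) (tshift c B).
Proof.
  induction 1; intros G' c Hn; simpl.
  - destruct (Nat.ltb_spec n c); constructor; lia.
  - constructor.
  - constructor; auto.
  - apply SubAllL with (tau := tshift c tau);
      eauto using mono_tshift, wf_typ_tshift.
    rewrite <- tshift_topen; auto.
  - constructor. rewrite <- tshift_tshift by lia.
    apply IHsub; simpl; lia.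
Qed.

Scheme check_mut := Induction for check Sort Prop
with synth_mut := Induction for synth Sort Prop
with app_mut := Induction for app Sort Prop.
Combined Scheme typing_mut from check_mut, synth_mut, app_mut.

Lemma typing_tshift :
  (forall G e A, check G e A -> forall G' c, ctx_tshift c G G' ->
     check G' (tm_tshift_at c e) (tshift c A)) /\
  (forall G e A, synth G e A -> forall G' c, ctx_tshift c G G' ->
     synth G' (tm_tshift_at c e) (tshift c A)) /\
  (forall G e A C, app G e A C -> forall G' c, ctx_tshift c G G' ->
     app G' (tm_tshift_at c e) (tshift c A) (tshift c C)).
Proof.
  apply typing_mut; intros; simpl;
    match goal with H : ctx_tshift _ _ _ |- _ => pose proof H as [Hn Hl] end.
  - econstructor; eauto using sub_tshift.
  - constructor.
  - constructor. rewrite tm_tshift_tm_tshift_at. auto using ctx_tshift_tv.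
  - constructor. auto using ctx_tshift_var.
  - constructor. rewrite Hl, e. reflexivity.
  - constructor; eauto using wf_typ_tshift.
  - constructor.
  - apply SynLam.
    + apply (mono_tshift (TArr s t)); assumption.
    + eapply (wf_typ_tshift G G' _ (TArr s t)); eassumption.
    + auto using ctx_tshift_var.
  - econstructor; eauto.
  - apply AppAll with (tau := tshift c tau); eauto using mono_tshift, wf_typ_tshift.
    rewrite <- tshift_topen; auto.
  - constructor; auto.
Qed.

Lemma synth_weaken_tv (G : ctx) (e : tm) (A : typ) :
  synth G e A -> synth (CTv :: G) (tm_tshift e) (tshift 0 A).
Proof.
  intros H. rewrite <- tm_tshift_at0.
  apply (proj1 (proj2 typing_tshift)) with (G := G); auto using ctx_tshift_head.
Qed.

Lemma typing_shift :
  (forall G' e A, check G' e A -> forall G c, ctx_drop c G G' ->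
     check G (shift c e) A) /\
  (forall G' e A, synth G' e A -> forall G c, ctx_drop c G G' ->
     synth G (shift c e) A) /\
  (forall G' e A C, app G' e A C -> forall G c, ctx_drop c G G' ->
     app G (shift c e) A C).
Proof.
  apply typing_mut; intros; simpl;
    match goal with H : ctx_drop _ _ _ |- _ => pose proof H as (Hn & Hlt & Hge) end.
  - econstructor; eauto using sub_ntv.
  - constructor.
  - constructor. rewrite tm_tshift_shift. auto using ctx_drop_tv.
  - constructor. auto using ctx_drop_var.
  - destruct (Nat.ltb_spec k c); constructor; [rewrite <- Hlt | rewrite <- Hge]; auto.
  - constructor; eauto using wf_typ_ntv.
  - constructor.
  - constructor; eauto using wf_typ_ntv, ctx_drop_var.
  - econstructor; eauto.
  - econstructor; eauto using wf_typ_ntv.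
  - constructor; auto.
Qed.

Lemma synth_weaken_var (G : ctx) (e : tm) (A B : typ) :
  synth G e A -> synth (CVar B :: G) (shift 0 e) A.
Proof.
  intros H. apply (proj1 (proj2 typing_shift)) with (G' := G); auto using ctx_drop_head.
Qed.

Lemma typing_subst :
  (forall G e A, check G e A -> forall G' k s B, ctx_drop k G G' ->
     lookup G k = Some B -> synth G' s B -> check G' (subst k s e) A) /\
  (forall G e A, synth G e A -> forall G' k s B, ctx_drop k G G' ->
     lookup G k = Some B -> synth G' s B -> synth G' (subst k s e) A) /\
  (forall G e A C, app G e A C -> forall G' k s B, ctx_drop k G G' ->
     lookup G k = Some B -> synth G' s B -> app G' (subst k s e) A C).
Proof.
  apply typing_mut; intros; simpl;
    match goal with H : ctx_drop _ _ _ |- _ => pose proof H as (Hn & Hlt & Hge) end.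
  - econstructor; eauto using sub_ntv.
  - constructor.
  - constructor. rewrite tm_tshift_subst.
    eapply H with (B := tshift 0 B);
      eauto using ctx_drop_tv, synth_weaken_tv.
    simpl; rewrite H1; reflexivity.
  - constructor. eauto using ctx_drop_var, synth_weaken_var.
  - index_cases.
    + constructor. rewrite Hlt; auto.
    + subst. congruence.
    + constructor. destruct k as [|k]; [lia|]. rewrite Hge by lia. auto.
  - constructor; eauto using wf_typ_ntv.
  - constructor.
  - constructor; eauto using wf_typ_ntv, ctx_drop_var, synth_weaken_var.
  - econstructor; eauto.
  - econstructor; eauto using wf_typ_ntv.
  - constructor; eauto.
Qed.

Theorem mainTheorem3 : forall (Psi : ctx) (e : tm) (A : typ),
  wf_ctx Psi ->
  synth Psi e A ->
  (forall e' C, check (cons (CVar A) Psi) e' C -> check Psi (subst 0 e e') C) /\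
  (forall e' C, synth (cons (CVar A) Psi) e' C -> synth Psi (subst 0 e e') C) /\
  (forall e' B C, app (cons (CVar A) Psi) e' B C -> app Psi (subst 0 e e') B C).
Proof.
  intros Psi e A _ He.
  destruct typing_subst as (Hcheck & Hsynth & Happ).
  repeat split; intros;
    [eapply Hcheck | eapply Hsynth | eapply Happ]; eauto using ctx_drop_head; reflexivity.
Qed.
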